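(* Let $f(z)=z+\sum_{k=2}^{\infty}a_kz^k$ be analytic in $\mathbb{D}=\{z:|z|<1\}$ with $zf'(z)-f(z)=\frac12 z^2\phi(z)$ for all $z\in\mathbb{D}$, where $\phi$ is analytic in $\mathbb{D}$ and $|\phi(z)|\le1$, and let $s_n(z;f)=z+\sum_{k=2}^n a_kz^k$. Then for each $n\ge2$, \[\left|\frac{s_n'(z;f)}{f'(z)}-1\right|\le |z|^n\left(\frac{n+1}{2n}+A_n\frac{|z|}{1-|z|}\right),\qquad |z|=r<1,\] where $A_n=\dfrac{\sqrt{2r-r^2}}{2(1-r)}\bigl(n+1+\ln(n-1)+\gamma\bigr)$ and $\gamma\approx0.57722$ is the Euler–Mascheroni constant. *)

From Stdlib Require Import Reals.
From Coquelicot Require Import Coquelicot.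
Open Scope C_scope.

(* Partial sum s_n(z;f) = sum_{k=0}^n a_k z^k (with a_0 = 0, a_1 = 1 this is
   z + sum_{k=2}^n a_k z^k). *)
Definition partial_sum (a : nat -> C) (n : nat) (z : C) : C :=
  sum_n (fun k => a k * z ^ k) n.

Definition partial_sum_deriv (a : nat -> C) (n : nat) (z : C) : C :=
  sum_n (fun j => RtoC (INR (S j)) * a (S j) * z ^ j) (Nat.pred n).

Definition euler_gamma : R :=
  real (Lim_seq (fun m => (sum_n (fun k => / INR (S k)) (Nat.pred m) - ln (INR m))%R)).

Definition A_coef (n : nat) (r : R) : R :=
  (sqrt (2 * r - r ^ 2) / (2 * (1 - r)) * (INR n + 1 + ln (INR n - 1) + euler_gamma))%R.

From Stdlib Require Import Reals Lra Lia Psatz.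
From Coquelicot Require Import Coquelicot.

(* Write r = |z| and phi z = sum_i b_i z^i.  Comparing coefficients in z f' - f = z^2 phi / 2
   gives f' z = 1 + sum_i kappa_i b_i z^(i+1) with kappa_i = (i+2)/(2(i+1)) <= 1,
   and kappa_i <= (n+1)/(2n) for i >= n-1.  Since |phi| <= 1, Parseval gives
   sum_i |b_i|^2 <= 1, and writing f' z - 1 = (z phi z + int_0^1 z phi(t z) dt)/2
   gives |f' z - 1| <= r, so |f' z| >= 1 - r.

   The error f' - s_n' is the tail sum_{i >= n-1} kappa_i b_i z^(i+1); by
   Cauchy-Schwarz it is at most (n+1)/(2n) r^n sqrt(V / (1 - r^2)), V the l^2 mass
   of the tail of (b_i).  For r >= 1/4, dividing by |f'| >= 1 - r already gives
   r^n (n+1)/(2n) (1 + 2 r sqrt(2r - r^2) / (1-r)^2).  For r <= 1/4 one bounds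
   |f' - 1| by the head of the same series instead, whose l^2 mass U satisfies
   U + V <= 1.  This bound is below the stated one since
   n + 1 + ln(n-1) + gamma >= n + 1. *)

Open Scope C_scope.

(** * Finite sums and convergent series *)

(* [csum n u = u 0 + ... + u (n-1)]; unlike Coquelicot's [sum_n] it is built from
   [Cplus] directly, so [ring] and [field] see through it. *)
Fixpoint csum (n : nat) (u : nat -> C) : C :=
  match n with O => 0 | S m => csum m u + u m end.
Fixpoint rsum (n : nat) (u : nat -> R) : R :=
  match n with O => 0%R | S m => (rsum m u + u m)%R end.

Lemma csum_ext n u v : (forall k, (k < n)%nat -> u k = v k) -> csum n u = csum n v.
Proof.
  induction n; simpl; intros H; auto.
  rewrite IHn by (intros; apply H; lia). rewrite H by lia. auto.
Qed.

Lemma csum_plus n u v : csum n (fun k => u k + v k) = csum n u + csum n v.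
Proof. induction n; simpl; [ring | rewrite IHn; ring]. Qed.

Lemma csum_scal n c u : csum n (fun k => c * u k) = c * csum n u.
Proof. induction n; simpl; [ring | rewrite IHn; ring]. Qed.

Lemma csum_zero n : csum n (fun _ => RtoC 0) = 0.
Proof. induction n; simpl; [auto | rewrite IHn; ring]. Qed.

Lemma csum_add m k u : csum (m + k) u = csum m u + csum k (fun i => u (m + i)%nat).
Proof.
  induction k; simpl; [rewrite Nat.add_0_r; ring |].
  rewrite Nat.add_succ_r. simpl. rewrite IHk. ring.
Qed.

Lemma csum_Sl n u : csum (S n) u = u 0%nat + csum n (fun k => u (S k)).
Proof. induction n; simpl in *; [ring | rewrite IHn; ring]. Qed.

Lemma csum_mult n m u v : csum n u * csum m v = csum n (fun i => csum m (fun j => u i * v j)).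
Proof. induction n; simpl; [ring | rewrite <- IHn, csum_scal; ring]. Qed.

Lemma csum_swap n m (F : nat -> nat -> C) :
  csum n (fun i => csum m (fun j => F i j)) = csum m (fun j => csum n (fun i => F i j)).
Proof.
  induction n; simpl.
  - symmetry. apply csum_zero.
  - rewrite IHn, <- csum_plus. auto.
Qed.

Lemma csum_kronecker n m (u : nat -> C) (c : C) : (m < n)%nat ->
  csum n (fun j => u j * (if Nat.eq_dec m j then c else 0)) = u m * c.
Proof.
  induction n; intros H; simpl; [lia |].
  destruct (Nat.eq_dec m n) as [<- | Hne].
  - rewrite (csum_ext m _ (fun _ => RtoC 0)), csum_zero; [ring |].
    intros k Hk. destruct (Nat.eq_dec m k); [lia | ring].
  - rewrite IHn by lia. ring.
Qed.

Lemma csum_conj n u : Cconj (csum n u) = csum n (fun k => Cconj (u k)).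
Proof.
  induction n; simpl.
  - apply injective_projections; simpl; ring.
  - rewrite Cplus_conj, IHn. auto.
Qed.

Lemma Re_csum n u : Re (csum n u) = rsum n (fun k => Re (u k)).
Proof. induction n; simpl; [auto | rewrite <- IHn; auto]. Qed.

Lemma RtoC_rsum n u : RtoC (rsum n u) = csum n (fun k => RtoC (u k)).
Proof. induction n; simpl; [auto | rewrite <- IHn, RtoC_plus; auto]. Qed.

Lemma Cmod_csum n u : (Cmod (csum n u) <= rsum n (fun k => Cmod (u k)))%R.
Proof.
  induction n; simpl; [rewrite Cmod_0; lra |].
  eapply Rle_trans; [apply Cmod_triangle | lra].
Qed.

Lemma rsum_ext n u v : (forall k, (k < n)%nat -> u k = v k) -> rsum n u = rsum n v.
Proof.
  induction n; simpl; intros H; auto.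
  rewrite IHn by (intros; apply H; lia). rewrite H by lia. auto.
Qed.

Lemma rsum_le n u v : (forall k, (k < n)%nat -> u k <= v k)%R -> (rsum n u <= rsum n v)%R.
Proof.
  induction n; simpl; intros H; [lra |].
  pose proof (IHn (fun k Hk => H k ltac:(lia))). pose proof (H n ltac:(lia)). lra.
Qed.

Lemma rsum_nonneg n u : (forall k, (k < n)%nat -> 0 <= u k)%R -> (0 <= rsum n u)%R.
Proof.
  induction n; simpl; intros H; [lra |].
  pose proof (IHn (fun k Hk => H k ltac:(lia))). pose proof (H n ltac:(lia)). lra.
Qed.

Lemma rsum_scal n c u : rsum n (fun k => c * u k)%R = (c * rsum n u)%R.
Proof. induction n; simpl; [ring | rewrite IHn; ring]. Qed.

Lemma rsum_const n c : rsum n (fun _ => c) = (INR n * c)%R.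
Proof. induction n; simpl rsum; [simpl; ring | rewrite IHn, S_INR; ring]. Qed.

Lemma rsum_add m k u : rsum (m + k) u = (rsum m u + rsum k (fun i => u (m + i)%nat))%R.
Proof.
  induction k; simpl; [rewrite Nat.add_0_r; ring |].
  rewrite Nat.add_succ_r. simpl. rewrite IHk. ring.
Qed.

Lemma rsum_geom_le q n : (0 <= q < 1)%R -> (rsum n (fun i => q ^ i) <= / (1 - q))%R.
Proof.
  intros Hq.
  assert (E : ((1 - q) * rsum n (fun i => q ^ i) = 1 - q ^ n)%R).
  { induction n; simpl; [ring | rewrite Rmult_plus_distr_l, IHn; ring]. }
  assert (0 <= q ^ n)%R by (apply pow_le; lra).
  apply Rmult_le_reg_l with (1 - q)%R; [lra |]. rewrite E, Rinv_r; lra.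
Qed.

Lemma rsum_Cauchy_Schwarz n (x y : nat -> R) :
  (rsum n (fun i => x i * y i) ^ 2 <= rsum n (fun i => x i ^ 2) * rsum n (fun i => y i ^ 2))%R.
Proof.
  induction n; cbn [rsum]; [lra |].
  set (A := rsum n (fun i => x i * y i)%R) in *.
  set (P := rsum n (fun i => x i ^ 2)%R) in *.
  set (Q := rsum n (fun i => y i ^ 2)%R) in *.
  assert (HP : (0 <= P)%R) by (apply rsum_nonneg; intros; apply pow2_ge_0).
  assert (HQ : (0 <= Q)%R) by (apply rsum_nonneg; intros; apply pow2_ge_0).
  set (u := x n). set (v := y n).
  assert (Hcross : (2 * A * (u * v) <= P * v ^ 2 + Q * u ^ 2)%R).
  { assert (E : ((P * v ^ 2 + Q * u ^ 2) ^ 2 - (2 * A * (u * v)) ^ 2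
                 = (P * v ^ 2 - Q * u ^ 2) ^ 2 + 4 * (P * Q - A ^ 2) * (u * v) ^ 2)%R) by ring.
    pose proof (pow2_ge_0 (P * v ^ 2 - Q * u ^ 2)). pose proof (pow2_ge_0 (u * v)).
    pose proof (pow2_ge_0 u). pose proof (pow2_ge_0 v).
    assert (0 <= P * v ^ 2 + Q * u ^ 2)%R by nra.
    nra. }
  nra.
Qed.

Definition is_Cseries (u : nat -> C) (l : C) : Prop :=
  forall eps : R, (0 < eps)%R ->
    exists N0, forall N, (N0 <= N)%nat -> (Cmod (csum N u - l) < eps)%R.

Lemma sum_n_csum (u : nat -> C) N : sum_n u N = csum (S N) u.
Proof.
  induction N.
  - rewrite sum_O. simpl. change (u 0%nat = 0 + u 0%nat). ring.
  - rewrite sum_Sn, IHN. reflexivity.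
Qed.

Lemma sum_n_rsum (u : nat -> R) N : sum_n u N = rsum (S N) u.
Proof.
  induction N.
  - rewrite sum_O. simpl. ring.
  - rewrite sum_Sn, IHN. reflexivity.
Qed.

Lemma is_series_is_Cseries (u : nat -> C) (l : C) :
  @is_series C_AbsRing C_NormedModule u l -> is_Cseries u l.
Proof.
  intros H eps Heps.
  destruct (proj1 (filterlim_locally_ball_norm (sum_n u) l) H (mkposreal eps Heps)) as [N0 HN].
  exists (S N0). intros [|N] HN'; [lia |].
  specialize (HN N ltac:(lia)). unfold ball_norm in HN. rewrite sum_n_csum in HN. exact HN.
Qed.

Lemma is_pseries_is_Cseries (a : nat -> C) z l :
  @is_pseries C_AbsRing C_NormedModule a z l -> is_Cseries (fun k => a k * z ^ k) l.
Proof.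
  intros H eps Heps. destruct (is_series_is_Cseries _ _ H eps Heps) as [N0 HN].
  exists N0. intros N HN'. rewrite (csum_ext N _ (fun k => scal (pow_n z k) (a k))); auto.
  intros k _. replace (pow_n z k) with (z ^ k); [apply Cmult_comm |].
  induction k; simpl; [auto | rewrite IHk; auto].
Qed.

Lemma is_Cseries_ext u v l : (forall k, u k = v k) -> is_Cseries u l -> is_Cseries v l.
Proof.
  intros E H eps He. destruct (H eps He) as [N0 HN].
  exists N0. intros N HN'. rewrite (csum_ext N v u) by auto. auto.
Qed.

Lemma is_Cseries_plus u v l m :
  is_Cseries u l -> is_Cseries v m -> is_Cseries (fun k => u k + v k) (l + m).
Proof.
  intros Hu Hv eps He.
  destruct (Hu (eps / 2)%R ltac:(lra)) as [N1 H1], (Hv (eps / 2)%R ltac:(lra)) as [N2 H2].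
  exists (max N1 N2). intros N HN. rewrite csum_plus.
  replace (csum N u + csum N v - (l + m)) with ((csum N u - l) + (csum N v - m)) by ring.
  eapply Rle_lt_trans; [apply Cmod_triangle |].
  specialize (H1 N ltac:(lia)). specialize (H2 N ltac:(lia)). lra.
Qed.

Lemma is_Cseries_scal c u l : is_Cseries u l -> is_Cseries (fun k => c * u k) (c * l).
Proof.
  intros Hu eps He. pose proof (Cmod_ge_0 c).
  destruct (Hu (eps / (1 + Cmod c))%R) as [N1 H1]; [apply Rdiv_lt_0_compat; lra |].
  exists N1. intros N HN. specialize (H1 N HN).
  rewrite csum_scal. replace (c * csum N u - c * l) with (c * (csum N u - l)) by ring.
  rewrite Cmod_mult. pose proof (Cmod_ge_0 (csum N u - l)).
  apply Rmult_lt_compat_l with (r := (1 + Cmod c)%R) in H1; [| lra].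
  replace ((1 + Cmod c) * (eps / (1 + Cmod c)))%R with eps in H1 by (field; lra). nra.
Qed.

Lemma is_Cseries_shift u l :
  is_Cseries u l -> is_Cseries (fun k => u (S k)) (l - u 0%nat).
Proof.
  intros H eps He. destruct (H eps He) as [N0 HN]. exists N0. intros N HN'.
  specialize (HN (S N) ltac:(lia)). rewrite csum_Sl in HN.
  replace (csum N (fun k => u (S k)) - (l - u 0%nat))
    with (u 0%nat + csum N (fun k => u (S k)) - l) by ring. auto.
Qed.

Lemma is_Cseries_unshift u l :
  is_Cseries (fun k => u (S k)) l -> is_Cseries u (u 0%nat + l).
Proof.
  intros H eps He. destruct (H eps He) as [N0 HN]. exists (S N0). intros [|N] HN'; [lia |].
  specialize (HN N ltac:(lia)). rewrite csum_Sl.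
  replace (u 0%nat + csum N (fun k => u (S k)) - (u 0%nat + l))
    with (csum N (fun k => u (S k)) - l) by ring. auto.
Qed.

Lemma is_Cseries_le2 u l c d K B :
  is_Cseries u l -> (0 <= K)%R ->
  (exists N0, forall N, (N0 <= N)%nat ->
     (Cmod (csum N u - c) + K * Cmod (csum N u - d) <= B)%R) ->
  (Cmod (l - c) + K * Cmod (l - d) <= B)%R.
Proof.
  intros Hs HK [N0 HN]. apply Rnot_lt_le. intros Hlt.
  set (e := ((Cmod (l - c) + K * Cmod (l - d) - B) / (1 + K))%R).
  assert (He : (0 < e)%R) by (apply Rdiv_lt_0_compat; lra).
  destruct (Hs e He) as [N1 HN1].
  specialize (HN (max N0 N1) ltac:(lia)). specialize (HN1 (max N0 N1) ltac:(lia)).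
  set (s := csum (max N0 N1) u) in *.
  assert (H1 : (Cmod (l - c) <= Cmod (s - c) + Cmod (s - l))%R).
  { replace (l - c) with ((s - c) + - (s - l)) by ring.
    eapply Rle_trans; [apply Cmod_triangle | rewrite Cmod_opp; lra]. }
  assert (H2 : (Cmod (l - d) <= Cmod (s - d) + Cmod (s - l))%R).
  { replace (l - d) with ((s - d) + - (s - l)) by ring.
    eapply Rle_trans; [apply Cmod_triangle | rewrite Cmod_opp; lra]. }
  assert (e * (1 + K) = Cmod (l - c) + K * Cmod (l - d) - B)%R by (unfold e; field; lra).
  nra.
Qed.

Lemma is_Cseries_le u l c B :
  is_Cseries u l ->
  (exists N0, forall N, (N0 <= N)%nat -> (Cmod (csum N u - c) <= B)%R) ->
  (Cmod (l - c) <= B)%R.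
Proof.
  intros Hs [N0 HN].
  pose proof (is_Cseries_le2 u l c c 0 B Hs (Rle_refl 0)) as H.
  rewrite Rmult_0_l, Rplus_0_r in H. apply H.
  exists N0. intros N HN'. rewrite Rmult_0_l, Rplus_0_r. auto.
Qed.

Lemma is_Cseries_bounded u l : is_Cseries u l -> exists M, forall k, (Cmod (u k) <= M)%R.
Proof.
  intros H. destruct (H 1%R ltac:(lra)) as [N0 HN].
  set (S0 := rsum (S N0) (fun k => Cmod (u k))).
  assert (HS0 : forall k, (k <= N0)%nat -> (Cmod (u k) <= S0)%R).
  { intros k Hk. unfold S0. replace (S N0) with (S k + (N0 - k))%nat by lia.
    rewrite rsum_add. simpl rsum at 1.
    assert (0 <= rsum k (fun k => Cmod (u k)))%R by (apply rsum_nonneg; intros; apply Cmod_ge_0).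
    assert (0 <= rsum (N0 - k) (fun i => Cmod (u (S k + i)%nat)))%R
      by (apply rsum_nonneg; intros; apply Cmod_ge_0).
    lra. }
  assert (0 <= S0)%R by (apply rsum_nonneg; intros; apply Cmod_ge_0).
  exists (S0 + 2)%R. intros k.
  destruct (Compare_dec.le_lt_dec k N0) as [Hk | Hk]; [pose proof (HS0 k Hk); lra |].
  pose proof (HN k ltac:(lia)). pose proof (HN (S k) ltac:(lia)) as HS. simpl in HS.
  replace (u k) with ((csum k u + u k - l) - (csum k u - l)) by ring.
  eapply Rle_trans; [apply Cmod_triangle | rewrite Cmod_opp; lra].
Qed.

Lemma is_Cseries_Re_scal w u l :
  is_Cseries u l -> is_series (fun k => Re (w * u k)) (Re (w * l)).
Proof.
  intros H. apply is_Cseries_scal with (c := w) in H.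
  apply (proj2 (filterlim_locally_ball_norm _ _)). intros eps.
  destruct (H eps (cond_pos eps)) as [N0 HN]. exists N0. intros N HN'.
  unfold ball_norm. rewrite sum_n_rsum, <- Re_csum.
  eapply Rle_lt_trans; [| apply (HN (S N) ltac:(lia))].
  eapply Rle_trans; [| apply re_le_Cmod].
  right. destruct (csum (S N) _), (w * l). reflexivity.
Qed.

(** * Real projections and Taylor coefficients *)

Lemma Re_scal_RtoC w (t : R) c : Re (w * (RtoC t * c)) = (t * Re (w * c))%R.
Proof. destruct w, c. unfold Cmult, RtoC. simpl. ring. Qed.

Lemma Rabs_Re_mult_le w c : (Cmod w <= 1)%R -> (Rabs (Re (w * c)) <= Cmod c)%R.
Proof.
  intros H. eapply Rle_trans; [apply re_le_Cmod |]. rewrite Cmod_mult.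
  pose proof (Cmod_ge_0 c). pose proof (Cmod_ge_0 w). nra.
Qed.

Lemma is_pseries_Re_scal w (d : nat -> C) (x : R) l :
  is_Cseries (fun k => d k * RtoC x ^ k) l ->
  is_pseries (fun k => Re (w * d k)) x (Re (w * l)).
Proof.
  intros H. apply (is_Cseries_Re_scal w) in H.
  eapply is_series_ext; [| exact H]. intros k.
  rewrite pow_n_pow, <- RtoC_pow, (Cmult_comm (d k)), Re_scal_RtoC. reflexivity.
Qed.

Lemma CV_radius_Re_scal_ge w (d : nat -> C) (r : R) l :
  is_Cseries (fun k => d k * RtoC r ^ k) l -> Rbar_le r (CV_radius (fun k => Re (w * d k))).
Proof.
  intros Hl. apply (proj1 (CV_radius_bounded _)).
  destruct (is_Cseries_bounded _ _ Hl) as [M HM].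
  exists (Cmod w * M)%R. intros k. specialize (HM k).
  rewrite <- RtoC_pow, Cmult_comm in HM. rewrite Rmult_comm, <- Re_scal_RtoC.
  eapply Rle_trans; [apply re_le_Cmod |]. rewrite Cmod_mult.
  apply Rmult_le_compat_l; [apply Cmod_ge_0 | auto].
Qed.

Lemma CV_radius_Re_scal w (d : nat -> C) :
  (forall r : R, (0 <= r < 1)%R -> exists l, is_Cseries (fun k => d k * RtoC r ^ k) l) ->
  forall x : R, (Rabs x < 1)%R -> Rbar_lt (Rabs x) (CV_radius (fun k => Re (w * d k))).
Proof.
  intros H x Hx. pose proof (Rabs_pos x).
  destruct (H ((Rabs x + 1) / 2)%R ltac:(lra)) as [l Hl].
  pose proof (CV_radius_Re_scal_ge w d _ l Hl) as Hub.
  destruct (CV_radius (fun k => Re (w * d k))); simpl in *; auto. lra.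
Qed.

Lemma is_derive_Re_scal w (f : C -> C) (x : R) (l : C) :
  (Cmod w <= 1)%R ->
  @is_derive C_AbsRing C_NormedModule f (RtoC x) l ->
  is_derive (fun t : R => Re (w * f (RtoC t))) x (Re (w * l)).
Proof.
  intros Hw [_ Hd]. apply is_derive_Reals. intros eps Heps.
  destruct (Hd (RtoC x) (fun P H => H) (mkposreal (eps / 2) ltac:(lra))) as [del Hdel].
  exists del. intros h Hh0 Hh.
  assert (Eh : RtoC (x + h) - RtoC x = RtoC h) by (rewrite <- RtoC_minus; f_equal; ring).
  assert (Hb : @ball (AbsRing_UniformSpace C_AbsRing) (RtoC x) del (RtoC (x + h))).
  { change (Cmod (RtoC (x + h) - RtoC x) < del)%R. rewrite Eh, Cmod_R. auto. }
  specialize (Hdel _ Hb). simpl in Hdel.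
  change (Cmod (f (RtoC (x + h)) - f (RtoC x) - (RtoC (x + h) - RtoC x) * l)
          <= eps / 2 * Cmod (RtoC (x + h) - RtoC x))%R in Hdel.
  rewrite Eh, Cmod_R in Hdel.
  replace ((Re (w * f (RtoC (x + h))) - Re (w * f (RtoC x))) / h - Re (w * l))%R
    with (Re (w * (f (RtoC (x + h)) - f (RtoC x) - RtoC h * l)) / h)%R.
  2:{ destruct w, (f (RtoC (x + h))), (f (RtoC x)), l.
      unfold Cmult, Cminus, Cplus, Copp, RtoC. simpl. field. auto. }
  unfold Rdiv. rewrite Rabs_mult, Rabs_inv.
  pose proof (Rabs_Re_mult_le w (f (RtoC (x + h)) - f (RtoC x) - RtoC h * l) Hw).
  pose proof (Rabs_pos_lt h Hh0).
  apply Rle_lt_trans with (eps / 2 * Rabs h * / Rabs h)%R.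
  - apply Rmult_le_compat_r; [left; apply Rinv_0_lt_compat |]; lra.
  - field_simplify; lra.
Qed.

Lemma locally_Rabs_lt_1 (x : R) : (Rabs x < 1)%R -> locally x (fun t : R => (Rabs t < 1)%R).
Proof.
  intros Hx. exists (mkposreal ((1 - Rabs x) / 2) ltac:(lra)). intros y Hy.
  change (Rabs (y - x) < (1 - Rabs x) / 2)%R in Hy.
  pose proof (Rabs_triang_inv y x). lra.
Qed.

Definition half_z2_coef (b : nat -> C) (k : nat) : C :=
  match k with O => 0 | S O => 0 | S (S j) => b j / 2 end.

Lemma is_Cseries_half_z2 (b : nat -> C) z l :
  is_Cseries (fun k => b k * z ^ k) l ->
  is_Cseries (fun k => half_z2_coef b k * z ^ k) (/ 2 * z ^ 2 * l).
Proof.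
  intros H. apply is_Cseries_scal with (c := / 2 * z ^ 2) in H.
  replace (/ 2 * z ^ 2 * l) with (0 * 1 + (0 * (z * 1) + / 2 * z ^ 2 * l)) by ring.
  apply (is_Cseries_unshift (fun k => half_z2_coef b k * z ^ k)).
  apply (is_Cseries_unshift (fun k => half_z2_coef b (S k) * z ^ S k)).
  eapply is_Cseries_ext; [| exact H]. intros k. simpl. field.
Qed.

(* The complex derivative is only used through the real derivatives of
   [t |-> Re (w * f t)], which are derivatives of real power series. *)
Section Coefficients.
Variables (a b : nat -> C) (f f' phi : C -> C).
Hypothesis Hf : forall z, (Cmod z < 1)%R -> is_Cseries (fun k => a k * z ^ k) (f z).
Hypothesis Hd : forall z, (Cmod z < 1)%R -> @is_derive C_AbsRing C_NormedModule f z (f' z).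
Hypothesis Hb : forall z, (Cmod z < 1)%R -> is_Cseries (fun k => b k * z ^ k) (phi z).
Hypothesis Hrel : forall z, (Cmod z < 1)%R -> z * f' z - f z = / 2 * z ^ 2 * phi z.

Lemma is_Cseries_z_deriv z : (Cmod z < 1)%R ->
  is_Cseries (fun k => (a k + half_z2_coef b k) * z ^ k) (z * f' z).
Proof.
  intros Hz. replace (z * f' z) with (f z + / 2 * z ^ 2 * phi z) by (rewrite <- Hrel by auto; ring).
  eapply is_Cseries_ext; [| apply is_Cseries_plus; [apply Hf, Hz | apply is_Cseries_half_z2, Hb, Hz]].
  intros k. simpl. ring.
Qed.

Section Direction.
Variable w : C.
Hypothesis Hw : (Cmod w <= 1)%R.
Let alpha k := Re (w * a k).

Lemma CV_radius_alpha x : (Rabs x < 1)%R -> Rbar_lt (Rabs x) (CV_radius alpha).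
Proof.
  apply CV_radius_Re_scal. intros r Hr. exists (f (RtoC r)). apply Hf.
  rewrite Cmod_R, Rabs_right; lra.
Qed.

Lemma PSeries_alpha t : (Rabs t < 1)%R -> PSeries alpha t = Re (w * f (RtoC t)).
Proof.
  intros Ht. apply is_pseries_unique, is_pseries_Re_scal, Hf. rewrite Cmod_R. auto.
Qed.

Lemma Re_scal_deriv_real x : (Rabs x < 1)%R ->
  Re (w * f' (RtoC x)) = PSeries (PS_derive alpha) x.
Proof.
  intros Hx.
  assert (H1 : is_derive (fun t : R => Re (w * f (RtoC t))) x (Re (w * f' (RtoC x)))).
  { apply is_derive_Re_scal; auto. apply Hd. rewrite Cmod_R. auto. }
  assert (H2 : is_derive (fun t : R => Re (w * f (RtoC t))) x (PSeries (PS_derive alpha) x)).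
  { eapply is_derive_ext_loc; [| apply is_derive_PSeries, CV_radius_alpha, Hx].
    eapply filter_imp; [| apply locally_Rabs_lt_1, Hx]. intros t Ht. simpl.
    apply PSeries_alpha, Ht. }
  apply is_derive_unique in H1. apply is_derive_unique in H2. congruence.
Qed.

Lemma Re_scal_coef_identity k : (INR k * Re (w * a k))%R = Re (w * (a k + half_z2_coef b k)).
Proof.
  set (c1 := fun k => (INR k * alpha k)%R).
  set (c2 := fun k => Re (w * (a k + half_z2_coef b k))).
  assert (Ec1 : forall k, c1 k = PS_incr_1 (PS_derive alpha) k).
  { intros [| j]; unfold c1; simpl; [apply Rmult_0_l | reflexivity]. }
  assert (CV1 : forall x, (Rabs x < 1)%R -> Rbar_lt (Rabs x) (CV_radius c1)).
  { intros x Hx. rewrite (CV_radius_ext _ _ Ec1), CV_radius_incr_1, CV_radius_derive.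
    apply CV_radius_alpha, Hx. }
  assert (CV2 : forall x, (Rabs x < 1)%R -> Rbar_lt (Rabs x) (CV_radius c2)).
  { apply CV_radius_Re_scal. intros r Hr. exists (RtoC r * f' (RtoC r)).
    apply is_Cseries_z_deriv. rewrite Cmod_R, Rabs_right; lra. }
  assert (E : forall x, (Rabs x < 1)%R -> PSeries c1 x = PSeries c2 x).
  { intros x Hx.
    assert (P1 : is_pseries c1 x (x * PSeries (PS_derive alpha) x)%R).
    { eapply is_pseries_ext; [intros j; symmetry; apply Ec1 |].
      apply (is_pseries_incr_1 (PS_derive alpha) x), PSeries_correct, CV_radius_inside.
      rewrite CV_radius_derive. apply CV_radius_alpha, Hx. }
    assert (P2 : is_pseries c2 x (Re (w * (RtoC x * f' (RtoC x))))).
    { apply is_pseries_Re_scal, is_Cseries_z_deriv. rewrite Cmod_R. auto. }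
    rewrite (is_pseries_unique _ _ _ P1), (is_pseries_unique _ _ _ P2).
    rewrite Re_scal_RtoC, Re_scal_deriv_real; auto. }
  assert (H0 : (Rabs 0 < 1)%R) by (rewrite Rabs_R0; lra).
  specialize (CV1 0%R H0). specialize (CV2 0%R H0). rewrite Rabs_R0 in CV1, CV2.
  apply (PSeries_ext_recip c1 c2 k CV1 CV2).
  eapply filter_imp; [| apply locally_Rabs_lt_1, H0]. intros t Ht. apply E, Ht.
Qed.

Lemma Re_scal_deriv_0 : a 1%nat = 1 -> Re (w * f' 0) = Re w.
Proof.
  intros Ha1. assert (H0 : (Rabs 0 < 1)%R) by (rewrite Rabs_R0; lra).
  rewrite (Re_scal_deriv_real 0 H0), PSeries_0. unfold PS_derive, alpha.
  rewrite Ha1. destruct w. simpl. ring.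
Qed.
End Direction.

Lemma Cmod_opp_Ci_le_1 : (Cmod (- Ci) <= 1)%R.
Proof. rewrite Cmod_opp, Cmod_Ci. lra. Qed.

Lemma coef_identity k : RtoC (INR k) * a k = a k + half_z2_coef b k.
Proof.
  pose proof (Re_scal_coef_identity 1 ltac:(rewrite Cmod_1; lra) k) as HRe.
  pose proof (Re_scal_coef_identity (- Ci) Cmod_opp_Ci_le_1 k) as HIm.
  rewrite !Cmult_1_l in HRe.
  destruct (a k) as [p q], (a k + half_z2_coef b k) as [p' q'].
  apply injective_projections; simpl in *; lra.
Qed.

Lemma deriv_0 : a 1%nat = 1 -> f' 0 = 1.
Proof.
  intros Ha1.
  pose proof (Re_scal_deriv_0 1 ltac:(rewrite Cmod_1; lra) Ha1) as HRe.
  pose proof (Re_scal_deriv_0 (- Ci) Cmod_opp_Ci_le_1 Ha1) as HIm.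
  rewrite Cmult_1_l in HRe. destruct (f' 0) as [p q].
  apply injective_projections; simpl in *; lra.
Qed.
End Coefficients.

(** * Parseval's inequality *)

Definition cis (t : R) : C := (cos t, sin t).

Lemma cis_pow t n : cis t ^ n = cis (INR n * t).
Proof.
  induction n.
  - unfold cis. simpl. rewrite Rmult_0_l, cos_0, sin_0. reflexivity.
  - rewrite Cpow_S, IHn. unfold cis, Cmult. simpl fst; simpl snd. rewrite S_INR.
    replace ((INR n + 1) * t)%R with (t + INR n * t)%R by ring.
    rewrite cos_plus, sin_plus. f_equal; ring.
Qed.

Lemma Cmod_cis t : Cmod (cis t) = 1%R.
Proof.
  unfold Cmod, cis. simpl fst; simpl snd. rewrite <- sqrt_1. f_equal.
  pose proof (sin2_cos2 t). unfold Rsqr in H. simpl. lra.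
Qed.

Lemma Cmult_conj_Cmod_1 (u : C) : Cmod u = 1%R -> u * Cconj u = 1.
Proof. intros H. rewrite <- Cmod2_conj, H, pow1. reflexivity. Qed.

Lemma csum_geom (x : C) n : (x - 1) * csum n (fun j => x ^ j) = x ^ n - 1.
Proof. induction n; simpl; [ring | rewrite Cmult_plus_distr_l, IHn; ring]. Qed.

Lemma csum_geom_root (x : C) n : x <> 1 -> x ^ n = 1 -> csum n (fun j => x ^ j) = 0.
Proof.
  intros H1 H2. destruct (Ceq_dec (csum n (fun j => x ^ j)) 0) as [| Hne]; auto.
  assert (Hx : x - 1 <> 0) by (intros E; apply H1; replace x with (x - 1 + 1) by ring; rewrite E; ring).
  exfalso. apply (Cmult_neq_0 _ _ Hx Hne). rewrite csum_geom, H2. ring.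
Qed.

Section UnityRoots.
Variable N : nat.
Hypothesis HN : (0 < N)%nat.

Definition unity_root := cis (2 * PI / INR N).

Lemma unity_root_pow d : unity_root ^ d = cis (2 * PI * INR d / INR N).
Proof. unfold unity_root. rewrite cis_pow. f_equal. field. apply not_0_INR. lia. Qed.

Lemma unity_root_pow_N : unity_root ^ N = 1.
Proof.
  rewrite unity_root_pow. unfold cis.
  replace (2 * PI * INR N / INR N)%R with (2 * PI)%R by (field; apply not_0_INR; lia).
  rewrite cos_2PI, sin_2PI. reflexivity.
Qed.

Lemma unity_root_pow_neq_1 d : (0 < d < N)%nat -> unity_root ^ d <> 1.
Proof.
  intros Hd E. rewrite unity_root_pow in E. injection E as E1 _.
  set (t := (PI * INR d / INR N)%R).
  assert (Ht : (0 < t < PI)%R).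
  { unfold t. pose proof PI_RGT_0. assert (0 < INR d)%R by (apply lt_0_INR; lia).
    assert (INR d < INR N)%R by (apply lt_INR; lia).
    split; [apply Rdiv_lt_0_compat; nra |].
    apply Rmult_lt_reg_r with (INR N); [lra |]. field_simplify; [nra | lra]. }
  replace (2 * PI * INR d / INR N)%R with (2 * t)%R in E1 by (unfold t; field; apply not_0_INR; lia).
  rewrite cos_2a_sin in E1. pose proof (sin_gt_0 t (proj1 Ht) (proj2 Ht)). nra.
Qed.

Lemma Cmod_unity_root_pow j : Cmod (unity_root ^ j) = 1%R.
Proof. rewrite Cmod_pow. unfold unity_root. rewrite Cmod_cis. apply pow1. Qed.

Lemma csum_unity_root_orth_le m m' : (m' <= m < N)%nat ->
  csum N (fun j => (unity_root ^ j) ^ m * Cconj ((unity_root ^ j) ^ m'))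
  = if Nat.eq_dec m m' then RtoC (INR N) else 0.
Proof.
  intros Hm.
  assert (E : forall j, (unity_root ^ j) ^ m * Cconj ((unity_root ^ j) ^ m')
                        = (unity_root ^ (m - m')) ^ j).
  { intros j. replace m with ((m - m') + m')%nat at 1 by lia.
    rewrite Cpow_add_r, <- Cmult_assoc, Cmult_conj_Cmod_1.
    - rewrite Cmult_1_r, <- !Cpow_mult_r. f_equal. lia.
    - rewrite Cmod_pow, Cmod_unity_root_pow. apply pow1. }
  rewrite (csum_ext N _ _ (fun j _ => E j)).
  destruct (Nat.eq_dec m m') as [<- | Hne].
  - rewrite Nat.sub_diag. simpl. clear.
    induction N as [| K IH]; simpl csum; [auto |].
    rewrite IH, S_INR, Cpow_1_l, RtoC_plus. auto.
  - apply csum_geom_root; [apply unity_root_pow_neq_1; lia |].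
    rewrite <- Cpow_mult_r, Nat.mul_comm, Cpow_mult_r, unity_root_pow_N. apply Cpow_1_l.
Qed.

Lemma csum_unity_root_orth m m' : (m < N)%nat -> (m' < N)%nat ->
  csum N (fun j => (unity_root ^ j) ^ m * Cconj ((unity_root ^ j) ^ m'))
  = if Nat.eq_dec m m' then RtoC (INR N) else 0.
Proof.
  intros H1 H2. destruct (Compare_dec.le_lt_dec m' m); [apply csum_unity_root_orth_le; lia |].
  pose proof (csum_unity_root_orth_le m' m ltac:(lia)) as E.
  apply (f_equal Cconj) in E. rewrite csum_conj in E.
  rewrite (csum_ext N _ (fun k => Cconj ((unity_root ^ k) ^ m' * Cconj ((unity_root ^ k) ^ m)))).
  - rewrite E. destruct (Nat.eq_dec m' m), (Nat.eq_dec m m'); try lia.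
    apply injective_projections; simpl; ring.
  - intros k _. rewrite Cmult_conj, Cconj_conj. ring.
Qed.

Lemma discrete_Parseval (q : nat -> C) :
  csum N (fun j => csum N (fun m => q m * (unity_root ^ j) ^ m)
                   * Cconj (csum N (fun m => q m * (unity_root ^ j) ^ m)))
  = RtoC (INR N) * csum N (fun m => q m * Cconj (q m)).
Proof.
  transitivity (csum N (fun j => csum N (fun m => csum N (fun m' =>
    (q m * Cconj (q m')) * ((unity_root ^ j) ^ m * Cconj ((unity_root ^ j) ^ m')))))).
  { apply csum_ext. intros j _. rewrite csum_conj, csum_mult.
    apply csum_ext. intros m _. apply csum_ext. intros m' _. rewrite Cmult_conj. ring. }
  rewrite csum_swap, <- csum_scal. apply csum_ext. intros m Hm.
  rewrite csum_swap.
  transitivity (csum N (fun m' => (q m * Cconj (q m'))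
                                  * (if Nat.eq_dec m m' then RtoC (INR N) else 0))).
  { apply csum_ext. intros m' Hm'. rewrite csum_scal, csum_unity_root_orth; auto. }
  rewrite csum_kronecker by auto. ring.
Qed.
End UnityRoots.

Lemma pow_le_1 x n : (0 <= x <= 1)%R -> (x ^ n <= 1)%R.
Proof.
  intros H. induction n; simpl; [lra |].
  assert (0 <= x ^ n)%R by (apply pow_le; lra). nra.
Qed.

Lemma pow_1_sub_ge d n : (0 <= d <= 1)%R -> (1 - INR n * d <= (1 - d) ^ n)%R.
Proof.
  intros Hd. induction n; [simpl; lra |].
  rewrite S_INR. simpl. assert (0 <= (1 - d) ^ n)%R by (apply pow_le; lra).
  pose proof (pos_INR n). nra.
Qed.

Lemma le_1_of_le_sqr_1_plus D : (forall e, 0 < e -> D <= (1 + e) ^ 2)%R -> (D <= 1)%R.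
Proof.
  intros H. apply Rnot_lt_le. intros HD.
  set (e := Rmin 1 ((D - 1) / 4)).
  assert (0 < e)%R by (apply Rmin_pos; lra).
  assert (e <= 1 /\ e <= (D - 1) / 4)%R as [] by (split; [apply Rmin_l | apply Rmin_r]).
  specialize (H e ltac:(lra)). nra.
Qed.

Section Parseval.
Variables (b : nat -> C) (phi : C -> C).
Hypothesis Hb : forall z, (Cmod z < 1)%R -> is_Cseries (fun k => b k * z ^ k) (phi z).
Hypothesis Hphi : forall z, (Cmod z < 1)%R -> (Cmod (phi z) <= 1)%R.

(* Comparison with the terms at the radius [(1 + rho) / 2], which are bounded. *)
Lemma pseries_tail_geometric rho : (0 <= rho < 1)%R ->
  exists K q, (0 <= K)%R /\ (0 <= q < 1)%R /\
  forall x, Cmod x = rho -> forall M,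
    (Cmod (phi x - csum M (fun k => b k * x ^ k))%C <= K * q ^ M / (1 - q))%R.
Proof.
  intros Hr. set (r' := ((1 + rho) / 2)%R).
  assert (Hr' : (0 < r')%R) by (unfold r'; lra).
  destruct (is_Cseries_bounded _ _ (Hb (RtoC r') ltac:(rewrite Cmod_R, Rabs_right; unfold r'; lra)))
    as [K HK].
  assert (HK0 : (0 <= K)%R) by (eapply Rle_trans; [apply Cmod_ge_0 | apply (HK 0%nat)]).
  set (q := (rho / r')%R).
  assert (Hq : (0 <= q < 1)%R).
  { unfold q. split; [apply Rdiv_le_0_compat; lra |].
    apply Rmult_lt_reg_r with r'; [lra |]. unfold r' in *. field_simplify; lra. }
  exists K, q. split; [auto | split; [auto |]].
  intros x Hx M. apply is_Cseries_le with (u := fun k => b k * x ^ k); [apply Hb; lra |].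
  exists M. intros N HNM. replace N with (M + (N - M))%nat by lia. rewrite csum_add.
  replace (csum M (fun k => b k * x ^ k) + csum (N - M) (fun i => b (M + i)%nat * x ^ (M + i))
           - csum M (fun k => b k * x ^ k))
    with (csum (N - M) (fun i => b (M + i)%nat * x ^ (M + i))) by ring.
  eapply Rle_trans; [apply Cmod_csum |].
  eapply Rle_trans; [apply rsum_le with (v := fun i => (K * q ^ M * q ^ i)%R) |].
  - intros i _. specialize (HK (M + i)%nat).
    rewrite Cmod_mult, Cmod_pow, Cmod_R, Rabs_right in HK by lra.
    rewrite Cmod_mult, Cmod_pow, Hx, Rmult_assoc, <- pow_add.
    assert (Hpow : (rho ^ (M + i) = q ^ (M + i) * r' ^ (M + i))%R)
      by (unfold q; rewrite <- Rpow_mult_distr; f_equal; field; lra).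
    rewrite Hpow. pose proof (pow_le q (M + i) (proj1 Hq)).
    replace (Cmod (b (M + i)%nat) * (q ^ (M + i) * r' ^ (M + i)))%R
      with (q ^ (M + i) * (Cmod (b (M + i)%nat) * r' ^ (M + i)))%R by ring.
    rewrite (Rmult_comm K). apply Rmult_le_compat_l; auto.
  - rewrite rsum_scal. unfold Rdiv. apply Rmult_le_compat_l.
    + apply Rmult_le_pos; [auto | apply pow_le; lra].
    + apply rsum_geom_le. auto.
Qed.

Lemma pseries_partial_sum_circle_le rho e : (0 <= rho < 1)%R -> (0 < e)%R ->
  exists M0, forall M, (M0 <= M)%nat -> forall x, Cmod x = rho ->
    (Cmod (csum M (fun k => b k * x ^ k))%C <= 1 + e)%R.
Proof.
  intros Hr He. destruct (pseries_tail_geometric rho Hr) as [K [q [HK [Hq Ht]]]].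
  destruct (pow_lt_1_zero q ltac:(rewrite Rabs_right; lra) (e * (1 - q) / (K + 1))%R)
    as [M0 HM0]; [apply Rdiv_lt_0_compat; [apply Rmult_lt_0_compat |]; lra |].
  exists M0. intros M HM x Hx.
  assert (HqM : (K * q ^ M / (1 - q) <= e)%R).
  { specialize (HM0 M HM). rewrite Rabs_right in HM0 by (apply Rle_ge, pow_le; lra).
    apply Rmult_le_reg_r with (1 - q)%R; [lra |].
    replace (K * q ^ M / (1 - q) * (1 - q))%R with (K * q ^ M)%R by (field; lra).
    apply Rle_trans with (K * (e * (1 - q) / (K + 1)))%R; [apply Rmult_le_compat_l; lra |].
    apply Rmult_le_reg_r with (K + 1)%R; [lra |]. field_simplify; nra. }
  pose proof (Ht x Hx M). pose proof (Hphi x ltac:(lra)).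
  set (s := csum M (fun k => b k * x ^ k)) in *.
  replace s with (phi x - (phi x - s)) by ring.
  eapply Rle_trans; [apply Cmod_triangle |]. rewrite Cmod_opp. lra.
Qed.

(* Sample the partial sums on the circle of radius [rho] at the [M]-th roots of
   unity, for [M] large, and apply discrete Parseval. *)
Lemma Parseval_circle rho L : (0 <= rho < 1)%R ->
  (rsum L (fun m => (Cmod (b m) * rho ^ m) ^ 2) <= 1)%R.
Proof.
  intros Hr. apply le_1_of_le_sqr_1_plus. intros e He.
  destruct (pseries_partial_sum_circle_le rho e Hr He) as [M0 HM0].
  set (M := S (max L M0)).
  assert (HM : (0 < INR M)%R) by (apply lt_0_INR; unfold M; lia).
  set (q := fun m => b m * RtoC (rho ^ m)).
  set (P := fun j => csum M (fun m => q m * (unity_root M ^ j) ^ m)).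
  assert (HP : forall j, (Cmod (P j) <= 1 + e)%R).
  { intros j. set (x := RtoC rho * unity_root M ^ j).
    assert (Hx : Cmod x = rho).
    { unfold x. rewrite Cmod_mult, Cmod_unity_root_pow, Cmod_R, Rabs_right; lra. }
    replace (P j) with (csum M (fun k => b k * x ^ k)).
    - apply HM0; [unfold M; lia | exact Hx].
    - apply csum_ext. intros k _. unfold q, x. rewrite Cpow_mult_l, RtoC_pow. ring. }
  pose proof (discrete_Parseval M ltac:(unfold M; lia) q) as E.
  change (csum M (fun j => P j * Cconj (P j))
          = RtoC (INR M) * csum M (fun m => q m * Cconj (q m))) in E.
  rewrite (csum_ext M (fun j => P j * Cconj (P j)) (fun j => RtoC (Cmod (P j) ^ 2)))
    in E by (intros; rewrite Cmod2_conj; auto).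
  rewrite (csum_ext M (fun m => q m * Cconj (q m)) (fun m => RtoC (Cmod (q m) ^ 2)))
    in E by (intros; rewrite Cmod2_conj; auto).
  rewrite <- !RtoC_rsum, <- RtoC_mult in E. apply RtoC_inj in E.
  assert (Hup : (rsum M (fun j => Cmod (P j) ^ 2) <= INR M * (1 + e) ^ 2)%R).
  { rewrite <- rsum_const. apply rsum_le. intros j _.
    pose proof (HP j). pose proof (Cmod_ge_0 (P j)). nra. }
  assert (Hlow : (rsum L (fun m => (Cmod (b m) * rho ^ m) ^ 2)
                  <= rsum M (fun m => Cmod (q m) ^ 2))%R).
  { replace M with (L + (M - L))%nat by (unfold M; lia). rewrite rsum_add.
    assert (0 <= rsum (M - L) (fun i => Cmod (q (L + i)%nat) ^ 2))%R
      by (apply rsum_nonneg; intros; apply pow2_ge_0).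
    rewrite (rsum_ext L _ (fun m => Cmod (q m) ^ 2)%R); [lra |].
    intros k _. unfold q. rewrite Cmod_mult, Cmod_R, Rabs_right; auto.
    apply Rle_ge, pow_le; lra. }
  assert (rsum M (fun m => Cmod (q m) ^ 2) <= (1 + e) ^ 2)%R
    by (apply Rmult_le_reg_l with (INR M); lra).
  lra.
Qed.

Lemma Parseval_le_1 L : (rsum L (fun m => Cmod (b m) ^ 2) <= 1)%R.
Proof.
  apply Rnot_lt_le. intros HS. set (S1 := rsum L (fun m => Cmod (b m) ^ 2)%R) in *.
  set (s := (/ S1)%R).
  assert (Hs : (0 < s < 1)%R).
  { unfold s. split; [apply Rinv_0_lt_compat; lra |].
    rewrite <- Rinv_1. apply Rinv_lt_contravar; lra. }
  pose proof (pos_INR L).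
  set (d := ((1 - s) / (2 * (INR L + 1)))%R).
  assert (Hd : (0 < d <= 1 / 2)%R).
  { unfold d. split; [apply Rdiv_lt_0_compat; lra |].
    apply Rmult_le_reg_r with (2 * (INR L + 1))%R; [lra |]. field_simplify; nra. }
  set (rho := (1 - d)%R).
  assert (Hrho : ((1 + s) / 2 <= rho ^ L)%R).
  { eapply Rle_trans; [| apply pow_1_sub_ge; lra]. unfold d.
    apply Rmult_le_reg_r with (2 * (INR L + 1))%R; [lra |]. field_simplify; nra. }
  assert (Hlow : ((rho ^ L) ^ 2 * S1 <= rsum L (fun m => (Cmod (b m) * rho ^ m) ^ 2))%R).
  { unfold S1. rewrite <- rsum_scal. apply rsum_le. intros m Hm.
    assert (0 <= rho ^ m)%R by (apply pow_le; unfold rho; lra).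
    assert (rho ^ L <= rho ^ m)%R.
    { replace L with (m + (L - m))%nat by lia. rewrite pow_add.
      assert (rho ^ (L - m) <= 1)%R by (apply pow_le_1; unfold rho; lra).
      assert (0 <= rho ^ (L - m))%R by (apply pow_le; unfold rho; lra). nra. }
    assert (0 <= rho ^ L)%R by (apply pow_le; unfold rho; lra).
    rewrite Rpow_mult_distr. pose proof (pow2_ge_0 (Cmod (b m))).
    assert ((rho ^ L) ^ 2 <= (rho ^ m) ^ 2)%R by (apply pow_incr; lra). nra. }
  pose proof (Parseval_circle rho L ltac:(unfold rho; lra)).
  assert (S1 * s = 1)%R by (unfold s; field; lra).
  assert (((1 + s) / 2) ^ 2 * S1 > 1)%R by (assert (((1 + s) / 2) ^ 2 > s)%R by nra; nra).
  assert (((1 + s) / 2) ^ 2 <= (rho ^ L) ^ 2)%R by (apply pow_incr; lra).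
  nra.
Qed.
End Parseval.

(** * An integral bound *)

(* [H = sum_j b_j z^(j+1) / (j+1)] is [int_0^1 z phi(t z) dt]; its projections
   [Re (w H)] are integrals of real power series in [t]. *)
Section Primitive.
Variables (b : nat -> C) (phi : C -> C).
Hypothesis Hb : forall z, (Cmod z < 1)%R -> is_Cseries (fun k => b k * z ^ k) (phi z).
Hypothesis Hphi : forall z, (Cmod z < 1)%R -> (Cmod (phi z) <= 1)%R.
Variable z : C.
Hypothesis Hz : (Cmod z < 1)%R.

Lemma is_Cseries_integrand t : (Cmod (RtoC t * z) < 1)%R ->
  is_Cseries (fun j => b j * z ^ S j * RtoC t ^ j) (z * phi (RtoC t * z)).
Proof.
  intros Htz. eapply is_Cseries_ext; [| apply is_Cseries_scal, Hb, Htz].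
  intros k. rewrite Cpow_S, Cpow_mult_l. ring.
Qed.

Lemma CV_radius_integrand w t : (0 <= t <= 1)%R ->
  Rbar_lt (Rabs t) (CV_radius (fun j => Re (w * (b j * z ^ S j)))).
Proof.
  intros Ht. pose proof (Cmod_ge_0 z).
  set (t0 := (2 / (1 + Cmod z))%R).
  assert (Ht0 : (1 < t0)%R).
  { unfold t0. apply Rmult_lt_reg_r with (1 + Cmod z)%R; [lra |]. field_simplify; lra. }
  assert (Ht0z : (Cmod (RtoC t0 * z) < 1)%R).
  { rewrite Cmod_mult, Cmod_R, Rabs_right by lra.
    unfold t0. apply Rmult_lt_reg_r with (1 + Cmod z)%R; [lra |]. field_simplify; lra. }
  pose proof (CV_radius_Re_scal_ge w _ _ _ (is_Cseries_integrand t0 Ht0z)) as Hge.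
  rewrite Rabs_right by lra. destruct (CV_radius _); simpl in *; auto; lra.
Qed.

Variable H : C.
Hypothesis HH : is_Cseries (fun j => b j * z ^ S j / RtoC (INR (S j))) H.

Lemma RInt_integrand w : RInt (PSeries (fun j => Re (w * (b j * z ^ S j)))) 0 1 = Re (w * H).
Proof.
  rewrite RInt_PSeries by (apply CV_radius_integrand; lra). apply is_pseries_unique.
  set (D := fun k : nat => match k return C with
                           | O => RtoC 0 | S j => b j * z ^ S j / RtoC (INR (S j)) end).
  assert (HD : is_Cseries (fun k => D k * RtoC 1 ^ k) H).
  { replace H with (D 0%nat * RtoC 1 ^ 0 + H) by (unfold D; simpl; ring).
    apply (is_Cseries_unshift (fun k => D k * RtoC 1 ^ k)). eapply is_Cseries_ext; [| exact HH].
    intros k. simpl. rewrite Cpow_1_l. ring. }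
  apply (is_pseries_Re_scal w) in HD.
  eapply is_pseries_ext; [| exact HD]. intros [| j].
  - unfold D. simpl. ring.
  - change (Re (w * (b j * z ^ S j / RtoC (INR (S j))))
            = Re (w * (b j * z ^ S j)) / INR (S j))%R.
    assert (HS : (INR (S j) <> 0)%R) by (apply not_0_INR; lia).
    destruct w, (b j * z ^ S j). unfold Cdiv, Cinv, Cmult, RtoC. simpl. field. auto.
Qed.

Lemma Re_scal_primitive_le w : (Cmod w <= 1)%R -> (Re (w * H) <= Cmod z)%R.
Proof.
  intros Hw. rewrite <- RInt_integrand. pose proof (Cmod_ge_0 z).
  eapply Rle_trans with (RInt (fun _ => Cmod z) 0 1);
    [| rewrite RInt_const; change ((1 - 0) * Cmod z <= Cmod z)%R; lra].
  apply RInt_le; [lra | apply ex_RInt_PSeries, CV_radius_integrand; lra | apply ex_RInt_const |].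
  intros t Ht.
  assert (Htz : (Cmod (RtoC t * z) < 1)%R) by (rewrite Cmod_mult, Cmod_R, Rabs_right; nra).
  rewrite (is_pseries_unique _ _ _ (is_pseries_Re_scal w _ _ _ (is_Cseries_integrand t Htz))).
  eapply Rle_trans; [apply Rle_abs |]. eapply Rle_trans; [apply Rabs_Re_mult_le, Hw |].
  rewrite Cmod_mult. pose proof (Hphi _ Htz). pose proof (Cmod_ge_0 (phi (RtoC t * z))). nra.
Qed.

Lemma Cmod_primitive_le : (Cmod H <= Cmod z)%R.
Proof.
  destruct (Ceq_dec H 0) as [-> | Hne]; [rewrite Cmod_0; apply Cmod_ge_0 |].
  assert (HmH : (0 < Cmod H)%R) by (apply Cmod_gt_0; auto).
  assert (HmH' : RtoC (Cmod H) <> 0) by (intro E; apply RtoC_inj in E; lra).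
  set (w := Cconj H / RtoC (Cmod H)).
  assert (Hw : Cmod w = 1%R).
  { unfold w. rewrite Cmod_div by auto. rewrite Cmod_conj, Cmod_R, Rabs_right by lra. field. lra. }
  assert (HwH : Re (w * H) = Cmod H).
  { unfold w. replace (Cconj H / RtoC (Cmod H) * H) with (H * Cconj H / RtoC (Cmod H))
      by (field; auto).
    rewrite <- Cmod2_conj. unfold Cdiv. rewrite <- RtoC_inv, <- RtoC_mult by lra. simpl. field. lra. }
  rewrite <- HwH. apply Re_scal_primitive_le. lra.
Qed.
End Primitive.

(** * Real inequalities *)

Section RealInequalities.
Local Open Scope R_scope.

Lemma rsum_pow2_geom_le n r : 0 <= r < 1 -> rsum n (fun i => (r ^ i) ^ 2) * (1 - r ^ 2) <= 1.
Proof.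
  intros Hr. rewrite (rsum_ext n _ (fun i => (r ^ 2) ^ i))
    by (intros; rewrite <- !pow_mult; f_equal; lia).
  pose proof (rsum_geom_le (r ^ 2) n ltac:(split; nra)) as H.
  apply Rmult_le_compat_r with (r := 1 - r ^ 2) in H; [| nra]. rewrite Rinv_l in H; nra.
Qed.

Lemma small_radius_poly_ineq r beta : 0 < r <= 1 / 4 -> 1 + 4 * r ^ 2 <= beta ->
  (1 + beta * (3 / 4) * r ^ 2) ^ 2 + beta ^ 2 * r ^ 2 <= beta ^ 2 * (1 - r ^ 2).
Proof.
  intros Hr Hb. set (d := beta - (1 + 4 * r ^ 2)).
  assert (Hd : 0 <= d) by (unfold d; lra).
  replace beta with (1 + 4 * r ^ 2 + d) by (unfold d; ring).
  assert (Hs : 0 < r ^ 2 <= 1 / 16) by (split; nra).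
  set (s := r ^ 2) in *.
  assert (s * s <= s / 16) by nra.
  assert (s * s * s <= s / 256) by nra.
  assert (s * s * s * s <= s / 4096) by nra.
  assert (0 <= d * s) by nra. assert (0 <= d * d) by nra.
  assert (d * s * s <= d * s / 16) by nra.
  assert (d * d * s <= d * d / 16) by nra.
  assert (d * s * s * s <= d * s / 256) by nra.
  assert (d * d * s * s <= d * d / 256) by nra.
  nra.
Qed.

Lemma Cauchy_Schwarz_2 alpha beta X Y r :
  (alpha * X + beta * Y) ^ 2 * r ^ 2 <= (alpha ^ 2 + beta ^ 2 * r ^ 2) * (X ^ 2 * r ^ 2 + Y ^ 2).
Proof.
  assert (0 <= (alpha * Y - beta * r ^ 2 * X) ^ 2) by apply pow2_ge_0.
  assert ((alpha ^ 2 + beta ^ 2 * r ^ 2) * (X ^ 2 * r ^ 2 + Y ^ 2) - (alpha * X + beta * Y) ^ 2 * r ^ 2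
          = (alpha * Y - beta * r ^ 2 * X) ^ 2) by ring.
  lra.
Qed.

(* [X], [Y] stand for the weighted l^1 norms of the tail and the head of the
   coefficients of [phi], [V], [U] for their l^2 norms. *)
Lemma small_radius_ineq (r Q X Y U V c rn : R) :
  0 < r <= 1 / 4 -> 4 * r ^ 2 <= Q -> 0 <= X -> 0 <= Y -> 0 <= U -> 0 <= V ->
  X ^ 2 * (1 - r ^ 2) <= V -> Y ^ 2 * (1 - r ^ 2) <= U * r ^ 2 -> U + V <= 1 ->
  0 < c <= 3 / 4 -> 0 <= rn <= r ^ 2 ->
  c * rn * X + (rn * c * (1 + Q)) * (Y + c * rn * X) <= rn * c * (1 + Q).
Proof.
  intros Hr HQ HX HY HU HV HXV HYU HUV Hc Hrn.
  set (beta := 1 + Q). set (alpha := 1 + beta * (3 / 4) * r ^ 2).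
  pose proof (small_radius_poly_ineq r beta Hr ltac:(unfold beta; lra)) as K. fold alpha in K.
  assert (Hbeta : 1 <= beta) by (unfold beta; nra).
  assert (Hr2 : 0 < r ^ 2 < 1) by (split; nra).
  assert (CS : (alpha * X + beta * Y) ^ 2 * (1 - r ^ 2) <= alpha ^ 2 + beta ^ 2 * r ^ 2).
  { pose proof (Cauchy_Schwarz_2 alpha beta X Y r).
    assert ((X ^ 2 * r ^ 2 + Y ^ 2) * (1 - r ^ 2) <= r ^ 2) by nra.
    assert (0 <= alpha ^ 2 + beta ^ 2 * r ^ 2) by nra.
    assert ((alpha * X + beta * Y) ^ 2 * r ^ 2 * (1 - r ^ 2) <= (alpha ^ 2 + beta ^ 2 * r ^ 2) * r ^ 2)
      by nra.
    apply Rmult_le_reg_r with (r ^ 2); [lra |].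
    replace ((alpha * X + beta * Y) ^ 2 * (1 - r ^ 2) * r ^ 2)
      with ((alpha * X + beta * Y) ^ 2 * r ^ 2 * (1 - r ^ 2)) by ring. lra. }
  assert (CS' : (alpha * X + beta * Y) ^ 2 <= beta ^ 2) by nra.
  assert (Hab : alpha * X + beta * Y <= beta).
  { assert (0 <= alpha * X + beta * Y) by (unfold alpha; nra). nra. }
  assert (0 <= c * rn <= 3 / 4 * r ^ 2) by (split; nra).
  assert (X + beta * (Y + c * rn * X) <= beta).
  { assert (beta * (c * rn * X) <= beta * (3 / 4 * r ^ 2) * X).
    { replace (beta * (3 / 4 * r ^ 2) * X) with (beta * (3 / 4 * r ^ 2 * X)) by ring.
      apply Rmult_le_compat_l; nra. }
    unfold alpha in Hab. nra. }
  replace (c * rn * X + rn * c * beta * (Y + c * rn * X))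
    with (rn * c * (X + beta * (Y + c * rn * X))) by ring.
  apply Rmult_le_compat_l; nra.
Qed.

Lemma large_radius_ineq r : 1 / 4 <= r < 1 ->
  1 <= (1 + 2 * r * sqrt (2 * r - r ^ 2) / (1 - r) ^ 2) * sqrt (1 - r ^ 2) * (1 - r).
Proof.
  intros Hr. set (p := sqrt (2 * r - r ^ 2)). set (S := sqrt (1 - r ^ 2)).
  assert (Hp : p * p = 2 * r - r ^ 2) by (apply sqrt_sqrt; nra).
  assert (HS : S * S = 1 - r ^ 2) by (apply sqrt_sqrt; nra).
  assert (0 <= p) by apply sqrt_pos. assert (0 <= S) by apply sqrt_pos.
  assert (Hp1 : 0.66 <= p) by nra.
  assert (HS1 : 1.25 * (1 - r) <= S) by nra.
  replace ((1 + 2 * r * p / (1 - r) ^ 2) * S * (1 - r))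
    with (S * (1 - r) + 2 * r * p * S / (1 - r)) by (field; lra).
  assert (2 * r * p * S / (1 - r) >= 2 * r * 0.66 * 1.25).
  { apply Rle_ge, Rmult_le_reg_r with (1 - r); [lra |].
    replace (2 * r * p * S / (1 - r) * (1 - r)) with (2 * r * p * S) by (field; lra).
    assert (p * S >= 0.66 * 1.25 * (1 - r)) by nra. nra. }
  nra.
Qed.

Lemma ln_1_plus_le x : 0 < x -> ln (1 + x) <= x.
Proof.
  intros Hx. rewrite <- (ln_exp x) at 2. left.
  apply ln_increasing; [lra | apply exp_ineq1; lra].
Qed.

Lemma ln_le_harmonic k : ln (INR (S (S k))) <= sum_n (fun j => / INR (S j)) k.
Proof.
  induction k.
  - rewrite sum_O. simpl. rewrite Rinv_1. apply ln_1_plus_le. lra.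
  - rewrite sum_Sn.
    change (plus ?x ?y) with (x + y).
    assert (Hk : 0 < INR (S (S k))) by (apply lt_0_INR; lia).
    assert (Hk' : 0 < / INR (S (S k))) by (apply Rinv_0_lt_compat; lra).
    replace (INR (S (S (S k)))) with (INR (S (S k)) * (1 + / INR (S (S k))))
      by (rewrite (S_INR (S (S k))); field; lra).
    rewrite ln_mult by lra. pose proof (ln_1_plus_le _ Hk'). lra.
Qed.

(* [real] maps an infinite limit to 0, so no convergence is needed here. *)
Lemma euler_gamma_ge_0 : 0 <= euler_gamma.
Proof.
  unfold euler_gamma.
  set (u := fun m => sum_n (fun k => / INR (S k)) (Nat.pred m) - ln (INR m)).
  assert (Hu : forall m, 0 <= u m).
  { intros [| [| m]]; unfold u; simpl Nat.pred.
    - rewrite sum_O. unfold ln. destruct (Rlt_dec 0 (INR 0)) as [Hlt | _]; [exfalso; simpl in Hlt; lra |].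
      rewrite INR_1, Rinv_1. lra.
    - rewrite sum_O, INR_1, ln_1, Rinv_1. lra.
    - pose proof (ln_le_harmonic m). rewrite sum_Sn. change (plus ?x ?y) with (x + y).
      assert (0 < / INR (S (S m))) by (apply Rinv_0_lt_compat, lt_0_INR; lia). lra. }
  assert (H : Rbar_le (Lim_seq (fun _ => 0)) (Lim_seq u))
    by (apply Lim_seq_le_loc; exists 0%nat; intros; apply Hu).
  rewrite Lim_seq_const in H. destruct (Lim_seq u); simpl in *; lra.
Qed.

Definition refined_bound (n : nat) (r : R) : R :=
  r ^ n * ((INR n + 1) / (2 * INR n)) * (1 + 2 * r * sqrt (2 * r - r ^ 2) / (1 - r) ^ 2).

Lemma refined_bound_le_A_coef n r : (2 <= n)%nat -> 0 <= r < 1 ->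
  refined_bound n r <= r ^ n * ((INR n + 1) / (2 * INR n) + A_coef n r * (r / (1 - r))).
Proof.
  intros Hn Hr. unfold refined_bound, A_coef.
  assert (Hn2 : 2 <= INR n) by (replace 2 with (INR 2) by (simpl; ring); apply le_INR; auto).
  assert (HK : INR n + 1 <= INR n + 1 + ln (INR n - 1) + euler_gamma).
  { pose proof euler_gamma_ge_0.
    assert (0 <= ln (INR n - 1)) by (rewrite <- ln_1; apply ln_le; lra). lra. }
  set (K := INR n + 1 + ln (INR n - 1) + euler_gamma) in *.
  set (p := sqrt (2 * r - r ^ 2)). assert (0 <= p) by apply sqrt_pos.
  rewrite Rmult_assoc. apply Rmult_le_compat_l; [apply pow_le; lra |].
  replace ((INR n + 1) / (2 * INR n) * (1 + 2 * r * p / (1 - r) ^ 2))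
    with ((INR n + 1) / (2 * INR n) + (INR n + 1) / INR n * (r * p / (1 - r) ^ 2)) by (field; lra).
  apply Rplus_le_compat_l.
  replace (p / (2 * (1 - r)) * K * (r / (1 - r))) with (K / 2 * (r * p / (1 - r) ^ 2)) by (field; lra).
  apply Rmult_le_compat_r; [apply Rdiv_le_0_compat; nra |].
  apply Rmult_le_reg_r with (2 * INR n); [lra |].
  replace ((INR n + 1) / INR n * (2 * INR n)) with (2 * (INR n + 1)) by (field; lra).
  replace (K / 2 * (2 * INR n)) with (K * INR n) by field. nra.
Qed.
End RealInequalities.

Definition deriv_coef (a : nat -> C) (j : nat) : C := RtoC (INR (S j)) * a (S j).

Definition kappa (i : nat) : R := INR (S (S i)) / (2 * INR (S i)).

Lemma kappa_nonneg i : (0 <= kappa i)%R.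
Proof.
  unfold kappa. apply Rdiv_le_0_compat; [apply pos_INR |].
  assert (0 < INR (S i))%R by (apply lt_0_INR; lia). lra.
Qed.

Lemma kappa_le n i : (1 <= n)%nat -> (n <= S i)%nat -> (kappa i <= (INR n + 1) / (2 * INR n))%R.
Proof.
  intros H1 H2. unfold kappa. rewrite (S_INR (S i)).
  assert (0 < INR n)%R by (apply lt_0_INR; lia).
  assert (INR n <= INR (S i))%R by (apply le_INR; lia).
  apply Rmult_le_reg_r with (2 * INR (S i) * (2 * INR n))%R; [nra |].
  field_simplify; nra.
Qed.

Lemma kappa_le_1 i : (kappa i <= 1)%R.
Proof.
  eapply Rle_trans; [apply (kappa_le 1); lia |]. simpl. lra.
Qed.

Lemma RtoC_kappa i : RtoC (kappa i) = (RtoC (INR (S i)) + 1) / (2 * RtoC (INR (S i))).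
Proof.
  assert (0 < INR (S i))%R by (apply lt_0_INR; lia).
  unfold kappa. rewrite (S_INR (S i)). set (m := INR (S i)) in *.
  apply injective_projections; unfold RtoC, Cdiv, Cinv, Cmult, Cplus; simpl; field; lra.
Qed.

Lemma RtoC_INR_S_neq_0 i : RtoC (INR (S i)) <> 0.
Proof. intros E. apply RtoC_inj in E. revert E. apply not_0_INR. lia. Qed.

Section Estimates.
Variables (a b : nat -> C) (f f' phi : C -> C).
Hypothesis Ha0 : a 0%nat = 0.
Hypothesis Ha1 : a 1%nat = 1.
Hypothesis Hf : forall z, (Cmod z < 1)%R -> is_Cseries (fun k => a k * z ^ k) (f z).
Hypothesis Hd : forall z, (Cmod z < 1)%R -> @is_derive C_AbsRing C_NormedModule f z (f' z).
Hypothesis Hb : forall z, (Cmod z < 1)%R -> is_Cseries (fun k => b k * z ^ k) (phi z).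
Hypothesis Hphi : forall z, (Cmod z < 1)%R -> (Cmod (phi z) <= 1)%R.
Hypothesis Hrel : forall z, (Cmod z < 1)%R -> z * f' z - f z = / 2 * z ^ 2 * phi z.

Lemma deriv_coef_0 : deriv_coef a 0 = 1.
Proof. unfold deriv_coef. rewrite Ha1. simpl. ring. Qed.

Lemma deriv_coef_S i : deriv_coef a (S i) = RtoC (kappa i) * b i.
Proof.
  pose proof (coef_identity a b f f' phi Hf Hd Hb Hrel (S (S i))) as H. simpl half_z2_coef in H.
  rewrite (S_INR (S i)), RtoC_plus in H.
  assert (Hbi : b i = 2 * RtoC (INR (S i)) * a (S (S i))).
  { replace (b i) with (2 * (a (S (S i)) + b i / 2) - 2 * a (S (S i))) by field.
    rewrite <- H. ring. }
  unfold deriv_coef. rewrite Hbi, RtoC_kappa, (S_INR (S i)), RtoC_plus.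
  pose proof (RtoC_INR_S_neq_0 i). field. auto.
Qed.

Lemma partial_sum_deriv_at_0 n : (1 <= n)%nat -> csum n (fun j => deriv_coef a j * 0 ^ j) = 1.
Proof.
  intros Hn. replace n with (S (n - 1)) by lia. rewrite csum_Sl, deriv_coef_0.
  rewrite (csum_ext _ _ (fun _ => RtoC 0)), csum_zero by (intros; simpl; ring). simpl. ring.
Qed.

Lemma Cmod_deriv_coef_S i : Cmod (deriv_coef a (S i)) = (kappa i * Cmod (b i))%R.
Proof. rewrite deriv_coef_S, Cmod_mult, Cmod_R, Rabs_right; auto. apply Rle_ge, kappa_nonneg. Qed.

Lemma is_Cseries_deriv z : (Cmod z < 1)%R -> z <> 0 ->
  is_Cseries (fun j => deriv_coef a j * z ^ j) (f' z).
Proof.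
  intros Hz Hz0. pose proof (is_Cseries_z_deriv a b f f' phi Hf Hb Hrel z Hz) as H.
  apply is_Cseries_shift, (is_Cseries_scal (/ z)) in H.
  replace (/ z * (z * f' z - (a 0%nat + half_z2_coef b 0) * z ^ 0)) with (f' z) in H
    by (rewrite Ha0; simpl; field; exact Hz0).
  eapply is_Cseries_ext; [| exact H]. intros k. cbv beta.
  rewrite <- (coef_identity a b f f' phi Hf Hd Hb Hrel (S k)). unfold deriv_coef.
  rewrite Cpow_S. field. exact Hz0.
Qed.

(* [f' z - 1 = (z phi z + H) / 2] with [H = int_0^1 z phi(t z) dt]. *)
Lemma Cmod_deriv_sub_1_le z : (Cmod z < 1)%R -> z <> 0 -> (Cmod (f' z - 1) <= Cmod z)%R.
Proof.
  intros Hz Hz0.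
  pose proof (is_Cseries_deriv z Hz Hz0) as HF. apply is_Cseries_shift in HF.
  rewrite deriv_coef_0 in HF.
  pose proof (is_Cseries_plus _ _ _ _ HF (is_Cseries_scal (- (z / 2)) _ _ (Hb z Hz))) as H.
  apply (is_Cseries_scal 2) in H.
  set (H0 := 2 * (f' z - 1 * z ^ 0 + - (z / 2) * phi z)) in H.
  assert (HH : is_Cseries (fun j => b j * z ^ S j / RtoC (INR (S j))) H0).
  { eapply is_Cseries_ext; [| exact H]. intros j. cbv beta.
    rewrite deriv_coef_S, RtoC_kappa.
    pose proof (RtoC_INR_S_neq_0 j). rewrite Cpow_S. field. auto. }
  pose proof (Cmod_primitive_le b phi Hb Hphi z Hz H0 HH) as HH0.
  replace (f' z - 1) with ((z * phi z + H0) * / 2) by (unfold H0; simpl; field).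
  rewrite Cmod_mult, Cmod_inv, Cmod_R, Rabs_right by (try (intros E; apply RtoC_inj in E); lra).
  pose proof (Cmod_triangle (z * phi z) H0). rewrite Cmod_mult in H1.
  pose proof (Hphi z Hz). pose proof (Cmod_ge_0 z). pose proof (Cmod_ge_0 (phi z)). nra.
Qed.

Section Radius.
Variables (n : nat) (z : C).
Hypothesis Hn : (2 <= n)%nat.
Hypothesis Hz : (Cmod z < 1)%R.
Hypothesis Hz0 : z <> 0.

Let r := Cmod z.
Let c := ((INR n + 1) / (2 * INR n))%R.
Let s N := csum N (fun j => deriv_coef a j * z ^ j).
Let X N := rsum (N - n) (fun i => Cmod (b (n - 1 + i)%nat) * r ^ i)%R.
Let V N := rsum (N - n) (fun i => Cmod (b (n - 1 + i)%nat) ^ 2)%R.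
Let Y := rsum (n - 1) (fun i => Cmod (b i) * r ^ S i)%R.
Let U := rsum (n - 1) (fun i => Cmod (b i) ^ 2)%R.

Lemma radius_pos : (0 < r < 1)%R.
Proof. split; [apply Cmod_gt_0 | ]; auto. Qed.

Lemma c_bounds : (0 < c <= 3 / 4)%R.
Proof.
  assert (HnR : (2 <= INR n)%R) by (replace 2%R with (INR 2) by (simpl; ring); apply le_INR; auto).
  unfold c. split; [apply Rdiv_lt_0_compat; lra |].
  apply Rmult_le_reg_r with (2 * INR n)%R; [lra |]. field_simplify; lra.
Qed.

Lemma partial_sum_tail_le N : (n <= N)%nat -> (Cmod (s N - s n) <= c * r ^ n * X N)%R.
Proof.
  intros HN. pose proof radius_pos.
  assert (E : s N - s n = csum (N - n) (fun i => deriv_coef a (n + i) * z ^ (n + i))).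
  { unfold s. replace N with (n + (N - n))%nat at 1 by lia. rewrite csum_add. ring. }
  rewrite E.
  eapply Rle_trans; [apply Cmod_csum |].
  unfold X. rewrite <- rsum_scal. apply rsum_le. intros i _.
  replace (n + i)%nat with (S (n - 1 + i)) by lia.
  rewrite Cmod_mult, Cmod_deriv_coef_S, Cmod_pow. fold r.
  replace (S (n - 1 + i)) with (n + i)%nat by lia. rewrite pow_add.
  pose proof (kappa_le n (n - 1 + i) ltac:(lia) ltac:(lia)). fold c in H0.
  pose proof (Cmod_ge_0 (b (n - 1 + i)%nat)).
  assert (0 <= r ^ n * r ^ i)%R by (apply Rmult_le_pos; apply pow_le; lra).
  replace (c * r ^ n * (Cmod (b (n - 1 + i)%nat) * r ^ i))%R
    with (c * (Cmod (b (n - 1 + i)%nat) * (r ^ n * r ^ i)))%R by ring.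
  rewrite Rmult_assoc. apply Rmult_le_compat_r; [apply Rmult_le_pos |]; auto.
Qed.

Lemma partial_sum_head_le : (Cmod (s n - 1) <= Y)%R.
Proof.
  pose proof radius_pos.
  assert (E : s n - 1 = csum (n - 1) (fun i => deriv_coef a (S i) * z ^ S i)).
  { unfold s. replace n with (S (n - 1)) at 1 by lia. rewrite csum_Sl, deriv_coef_0. simpl. ring. }
  rewrite E.
  eapply Rle_trans; [apply Cmod_csum |]. apply rsum_le. intros i _.
  rewrite Cmod_mult, Cmod_deriv_coef_S, Cmod_pow. fold r.
  pose proof (kappa_le_1 i). pose proof (kappa_nonneg i).
  assert (0 <= Cmod (b i) * r ^ S i)%R by (apply Rmult_le_pos; [apply Cmod_ge_0 | apply pow_le; lra]).
  rewrite Rmult_assoc. nra.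
Qed.

Lemma rsum_weighted_sqr_le m (x : nat -> R) :
  (rsum m (fun i => x i * r ^ i) ^ 2 * (1 - r ^ 2) <= rsum m (fun i => x i ^ 2))%R.
Proof.
  pose proof radius_pos.
  pose proof (rsum_Cauchy_Schwarz m x (fun i => r ^ i)%R).
  pose proof (rsum_pow2_geom_le m r ltac:(lra)).
  assert (0 <= rsum m (fun i => (r ^ i) ^ 2))%R by (apply rsum_nonneg; intros; apply pow2_ge_0).
  assert (0 <= rsum m (fun i => x i ^ 2))%R by (apply rsum_nonneg; intros; apply pow2_ge_0).
  assert (0 <= 1 - r ^ 2)%R by nra. nra.
Qed.

Lemma X_sqr_le N : (X N ^ 2 * (1 - r ^ 2) <= V N)%R.
Proof. apply rsum_weighted_sqr_le. Qed.

Lemma Y_sqr_le : (Y ^ 2 * (1 - r ^ 2) <= U * r ^ 2)%R.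
Proof.
  replace Y with (r * rsum (n - 1) (fun i => Cmod (b i) * r ^ i))%R
    by (unfold Y; rewrite <- rsum_scal; apply rsum_ext; intros; simpl; ring).
  pose proof (rsum_weighted_sqr_le (n - 1) (fun i => Cmod (b i))).
  assert (0 <= r ^ 2)%R by apply pow2_ge_0. unfold U. nra.
Qed.

Lemma U_plus_V_le_1 N : (n <= N)%nat -> (U + V N <= 1)%R.
Proof.
  intros HN. unfold U, V. rewrite <- rsum_add.
  replace (n - 1 + (N - n))%nat with (N - 1)%nat by lia. apply Parseval_le_1 with phi; auto.
Qed.

Lemma X_nonneg N : (0 <= X N)%R.
Proof.
  pose proof radius_pos. apply rsum_nonneg. intros.
  apply Rmult_le_pos; [apply Cmod_ge_0 | apply pow_le; lra].
Qed.

(* For small [r] the bound [|f' z| >= 1 - r] is too weak; instead [|f' z - 1|] is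
   controlled by the head of the same series, whose energy competes with the tail's. *)
Lemma deriv_sub_partial_small : (r <= 1 / 4)%R ->
  (Cmod (f' z - s n) <= refined_bound n r * Cmod (f' z))%R.
Proof.
  intros Hsm. pose proof radius_pos. pose proof c_bounds.
  set (p := sqrt (2 * r - r ^ 2)). set (Q := (2 * r * p / (1 - r) ^ 2)%R).
  assert (HR0 : refined_bound n r = (r ^ n * c * (1 + Q))%R) by reflexivity.
  assert (HQ : (4 * r ^ 2 <= Q)%R).
  { assert (Hp2 : (p * p = 2 * r - r ^ 2)%R) by (apply sqrt_sqrt; nra).
    assert (0 <= p)%R by apply sqrt_pos.
    assert (0 < (1 - r) ^ 2 <= 1)%R by (split; nra).
    unfold Q. apply Rmult_le_reg_r with ((1 - r) ^ 2)%R; [lra |].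
    replace (2 * r * p / (1 - r) ^ 2 * (1 - r) ^ 2)%R with (2 * r * p)%R by (field; lra).
    assert (2 * r <= p)%R by nra. nra. }
  assert (Hrn : (0 <= r ^ n <= r ^ 2)%R).
  { split; [apply pow_le; lra |]. replace n with (2 + (n - 2))%nat by lia. rewrite pow_add.
    assert (r ^ (n - 2) <= 1)%R by (apply pow_le_1; lra). nra. }
  assert (HQ0 : (0 <= 1 + Q)%R) by nra.
  assert (Hb2 : (Cmod (f' z - s n) + refined_bound n r * Cmod (f' z - 1) <= refined_bound n r)%R).
  { apply is_Cseries_le2 with (u := fun j => deriv_coef a j * z ^ j);
      [apply is_Cseries_deriv; auto | rewrite HR0; apply Rmult_le_pos; nra |].
    exists n. intros N HN. fold (s N).
    pose proof (partial_sum_tail_le N HN). pose proof partial_sum_head_le.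
    assert (HsN : (Cmod (s N - 1) <= Y + c * r ^ n * X N)%R).
    { replace (s N - 1) with ((s n - 1) + (s N - s n)) by ring.
      eapply Rle_trans; [apply Cmod_triangle | lra]. }
    assert (0 <= Y)%R by (eapply Rle_trans; [apply Cmod_ge_0 | eassumption]).
    assert (0 <= U)%R by (apply rsum_nonneg; intros; apply pow2_ge_0).
    assert (0 <= V N)%R by (apply rsum_nonneg; intros; apply pow2_ge_0).
    pose proof (small_radius_ineq r Q (X N) Y U (V N) c (r ^ n) ltac:(lra) HQ (X_nonneg N)
                  ltac:(auto) ltac:(auto) ltac:(auto) (X_sqr_le N) Y_sqr_le (U_plus_V_le_1 N HN)
                  c_bounds Hrn).
    rewrite HR0. apply Rmult_le_compat_l with (r := (r ^ n * c * (1 + Q))%R) in HsN;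
      [| apply Rmult_le_pos; nra].
    nra. }
  assert (1 - Cmod (f' z - 1) <= Cmod (f' z))%R.
  { pose proof (Cmod_triangle (f' z) (- (f' z - 1))) as T. rewrite Cmod_opp in T.
    replace (f' z + - (f' z - 1)) with (RtoC 1) in T by ring. rewrite Cmod_1 in T. lra. }
  assert (0 <= refined_bound n r)%R by (rewrite HR0; apply Rmult_le_pos; nra).
  nra.
Qed.

Lemma deriv_sub_partial_large : (1 / 4 <= r)%R ->
  (Cmod (f' z - s n) <= refined_bound n r * Cmod (f' z))%R.
Proof.
  intros Hlg. pose proof radius_pos. pose proof c_bounds.
  set (S := sqrt (1 - r ^ 2)).
  assert (HS : (S * S = 1 - r ^ 2)%R) by (apply sqrt_sqrt; nra).
  assert (HS0 : (0 < S)%R) by (apply sqrt_lt_R0; nra).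
  assert (Hcrn : (0 <= c * r ^ n)%R) by (apply Rmult_le_pos; [lra | apply pow_le; lra]).
  assert (Htail : (Cmod (f' z - s n) <= c * r ^ n / S)%R).
  { apply is_Cseries_le with (u := fun j => deriv_coef a j * z ^ j); [apply is_Cseries_deriv; auto |].
    exists n. intros N HN. eapply Rle_trans; [apply (partial_sum_tail_le N HN) |].
    assert (X N * S <= 1)%R.
    { pose proof (X_sqr_le N). pose proof (U_plus_V_le_1 N HN).
      assert (0 <= U)%R by (apply rsum_nonneg; intros; apply pow2_ge_0).
      pose proof (X_nonneg N). assert (0 <= X N * S)%R by nra. nra. }
    apply Rmult_le_reg_r with S; auto.
    replace (c * r ^ n / S * S)%R with (c * r ^ n)%R by (field; lra). nra. }
  assert (Hf' : (1 - r <= Cmod (f' z))%R).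
  { pose proof (Cmod_deriv_sub_1_le z Hz Hz0).
    pose proof (Cmod_triangle (f' z) (- (f' z - 1))) as T. rewrite Cmod_opp in T.
    replace (f' z + - (f' z - 1)) with (RtoC 1) in T by ring. rewrite Cmod_1 in T. fold r in H1. lra. }
  pose proof (large_radius_ineq r ltac:(lra)) as L. fold S in L.
  set (B := (1 + 2 * r * sqrt (2 * r - r ^ 2) / (1 - r) ^ 2)%R) in L.
  assert (HR0 : refined_bound n r = (c * r ^ n * B)%R) by (unfold refined_bound, B; fold c; ring).
  assert (0 <= B)%R by (unfold B; pose proof (sqrt_pos (2 * r - r ^ 2));
                        assert (0 < (1 - r) ^ 2)%R by nra; apply Rplus_le_le_0_compat;
                        [lra | apply Rdiv_le_0_compat; nra]).
  assert (c * r ^ n / S <= c * r ^ n * (B * (1 - r)))%R.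
  { apply Rmult_le_reg_r with S; auto.
    replace (c * r ^ n / S * S)%R with (c * r ^ n)%R by (field; lra). nra. }
  assert (0 <= c * r ^ n * B)%R by (apply Rmult_le_pos; auto).
  rewrite HR0. nra.
Qed.

Lemma partial_div_deriv_sub_1_le :
  (Cmod (csum n (fun j => deriv_coef a j * z ^ j) / f' z - 1)%C <= refined_bound n r)%R.
Proof.
  pose proof radius_pos.
  assert (Hkey : (Cmod (f' z - s n) <= refined_bound n r * Cmod (f' z))%R).
  { destruct (Rle_lt_dec r (1 / 4)).
    - apply deriv_sub_partial_small. auto.
    - apply deriv_sub_partial_large. lra. }
  assert (Hf'0 : f' z <> 0).
  { intros E. pose proof (Cmod_deriv_sub_1_le z Hz Hz0) as H1.
    rewrite E in H1. replace (0 - 1) with (- (1)) in H1 by ring.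
    rewrite Cmod_opp, Cmod_1 in H1. fold r in H1. lra. }
  assert (0 < Cmod (f' z))%R by (apply Cmod_gt_0; auto).
  fold (s n). replace (s n / f' z - 1) with (- (f' z - s n) / f' z) by (field; auto).
  rewrite Cmod_div, Cmod_opp by auto.
  apply Rmult_le_reg_r with (Cmod (f' z)); [lra |].
  replace (Cmod (f' z - s n) / Cmod (f' z) * Cmod (f' z))%R with (Cmod (f' z - s n)) by (field; lra).
  exact Hkey.
Qed.
End Radius.
End Estimates.

Theorem theorem3p1 (a : nat -> C) (f f' phi : C -> C) :
  a 0%nat = 0 -> a 1%nat = 1 ->
  (* f(z) = z + sum_{k>=2} a_k z^k, analytic in the unit disc *)
  (forall z : C, (Cmod z < 1)%R -> is_pseries a z (f z)) ->
  (* f' is the complex derivative of f in the disc *)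
  (forall z : C, (Cmod z < 1)%R -> is_derive f z (f' z)) ->
  (* phi analytic in the disc, bounded by 1 *)
  (exists b : nat -> C, forall z : C, (Cmod z < 1)%R -> is_pseries b z (phi z)) ->
  (forall z : C, (Cmod z < 1)%R -> (Cmod (phi z) <= 1)%R) ->
  (forall z : C, (Cmod z < 1)%R -> z * f' z - f z = / 2 * z ^ 2 * phi z) ->
  forall n : nat, (2 <= n)%nat ->
  forall z : C, (Cmod z < 1)%R ->
    (Cmod (partial_sum_deriv a n z / f' z - 1)
     <= Cmod z ^ n * ((INR n + 1) / (2 * INR n)
                      + A_coef n (Cmod z) * (Cmod z / (1 - Cmod z))))%R.
Proof.
  intros Ha0 Ha1 Hf Hd [b Hb] Hphi Hrel n Hn z Hz.
  assert (Hfs : forall z, (Cmod z < 1)%R -> is_Cseries (fun k => a k * z ^ k) (f z))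
    by (intros; apply is_pseries_is_Cseries; auto).
  assert (Hbs : forall z, (Cmod z < 1)%R -> is_Cseries (fun k => b k * z ^ k) (phi z))
    by (intros; apply is_pseries_is_Cseries; auto).
  replace (partial_sum_deriv a n z) with (csum n (fun j => deriv_coef a j * z ^ j))
    by (unfold partial_sum_deriv; rewrite sum_n_csum; f_equal; lia).
  destruct (Ceq_dec z 0) as [-> | Hz0].
  - rewrite (deriv_0 a f f' Hfs Hd Ha1), (partial_sum_deriv_at_0 a Ha1) by lia.
    rewrite Cmod_0, pow_i by lia.
    replace (1 / 1 - 1) with (RtoC 0) by field. rewrite Cmod_0. lra.
  - eapply Rle_trans; [apply (partial_div_deriv_sub_1_le a b f f' phi); auto |].
    apply refined_bound_le_A_coef; [auto | split; [apply Cmod_ge_0 | auto]].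
Qed.
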